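(* In the Markovian PRP setting below, assume that $g^p_t$ is $C^1$ and $g^a_t,c_t$ are $C^2$ for $t\in\mathbb{T}$. Then for $\beta\in\mathbb{R}$, $(A,\gamma)\in\mathbb{R}^N\times\mathbb{R}^D$: $$(A,\gamma)\in\mathbb{C}_t(\beta)\iff \beta\mu-\nabla c_t(A)+\beta\sigma\nabla g^a_t(\gamma)=0.$$ Moreover, let $\{(A_t,\beta_t,\gamma_t)\}_{t\in\mathbb{T}}$ be an optimal contract for the Principal (i.e. for each $t$, $(A_t,\beta_t,\gamma_t)$ maximizes $A\mu-c_t(A)+g^a_t(\gamma)+g^p_t(\sigma'A-\gamma)$ over $\beta\in\mathbb{R}$, $(A,\gamma)\in\mathbb{C}_t(\beta)$), and suppose that for every $t$ the matrix $\big[\,\mu+\sigma\nabla g^a_t(\gamma_t)\ \big|\ \beta_t\sigma\nabla^2g^a_t(\gamma_t)\ \big|\ -\nabla^2c_t(A_t)\,\big]\in\mathbb{R}^{N\times(1+D+N)}$ has full rank $N$. Then there exist $\lambda_t\in\mathbb{R}^N$ such that $$0=\beta_t\mu-\nabla c_t(A_t)+\beta_t\sigma\nabla g^a_t(\gamma_t),$$ $$0=\mu-\nabla c_t(A_t)+\sigma\nabla g^p_t(\sigma'A_t-\gamma_t)-\nabla^2c_t(A_t)\lambda_t,$$ $$0=\nabla g^a_t(\gamma_t)-\nabla g^p_t(\sigma'A_t-\gamma_t)+\beta_t\nabla^2g^a_t(\gamma_t)\sigma'\lambda_t,$$ $$0=\lambda_t\cdot[\mu+\sigma\nabla g^a_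t(\gamma_t)].$$
   Context: Markovian PRP setting: $T\in\mathbb{N}$, $\mathbb{T}=\{0,\dots,T-1\}$. The filtration $(\mathcal{F}_t)$ is generated by a $d$-dimensional process $\bar w$ observed by both parties; prices satisfy $\Delta P_{t+1}=diag(P_t)[\mu+\sigma\Delta\bar w_{t+1}]$ with $\mu\in\mathbb{R}^N$ and $\sigma\in\mathbb{R}^{N\times d}$ with linearly independent rows ($d\ge N$), so $\Delta\tilde P_{t+1}:=diag(P_t)^{-1}\Delta P_{t+1}=\mu+\sigma\Delta\bar w_{t+1}$. Predictable Representation Property: there are $(\mathcal{F}_t)$-adapted processes $w^{d+1},\dots,w^D$ such that $w=(\bar w,w^{d+1},\dots,w^D)$ has mutually uncorrelated, zero-mean increments with nontrivial finite second moments, independent of the past, and $L^0(\mathcal{F}_{t+1})=\{x+Z\Delta w_{t+1}:x\in L^0(\mathcal{F}_t),Z\in L^0(\mathcal{F}_t)^D\}$. $\sigma$ is identified with the $N\times D$ matrix obtained by appending $D-d$ zero columns; $\sigma'$ is its transpose. Preferences $U^a,U^p$ satisfy the usual conditions (normalized, proper, monotone, conditionally concave, translation invariant, time consistent); Markov assumption: the generators $g^l_t(z):=U^l_t(z\Delta w_{t+1})$ map $\mathbb{R}^D\to\mathbb{R}$ (deterministic), $l=a,p$; they are concave with $g^l_t(0)=0$. $c_t:\mathbb{R}^N\to\mathbb{R}$ strictly convex. In these variables a contract at time $t$ is $(A,\beta,\gamma)\in\mathbb{R}^N\times\mathbb{R}\times\mathbb{R}^D$ (Agent's continuation $\Gamma$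 has martingale part $\gamma\Delta w_{t+1}$), and $\mathbb{C}_t(\beta)$ is the set of $(A,\gamma)$ such that for all $\bar A\in\mathbb{R}^N$: $g^a_t(\gamma)-c_t(A)\ge\beta(\bar A-A)\mu+g^a_t(\gamma+\beta\sigma'(\bar A-A))-c_t(\bar A)$. *)

From Stdlib Require Import Reals.
From mathcomp Require Import ssreflect ssrfun ssrbool eqtype ssrnat seq fintype bigop.
Set Implicit Arguments.
Unset Strict Implicit.

Open Scope R_scope.

Definition vec (n : nat) := 'I_n -> R.
Definition mat (m n : nat) := 'I_m -> 'I_n -> R.

Definition vzero {n} : vec n := fun _ => 0.
Definition vadd {n} (x y : vec n) : vec n := fun i => x i + y i.
Definition vsub {n} (x y : vec n) : vec n := fun i => x i - y i.
Definition vscale {n} (a : R) (x : vec n) : vec n := fun i => a * x i.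

Definition dot {n} (x y : vec n) : R := \big[Rplus/0]_(i < n) (x i * y i).
Definition vnorm {n} (x : vec n) : R := sqrt (dot x x).

Definition mulmv {m n} (M : mat m n) (x : vec n) : vec m :=
  fun i => \big[Rplus/0]_(j < n) (M i j * x j).
Definition trmv {m n} (M : mat m n) (y : vec m) : vec n :=
  fun j => \big[Rplus/0]_(i < m) (M i j * y i).
Definition mulmm {m n p} (M : mat m n) (P : mat n p) : mat m p :=
  fun i k => \big[Rplus/0]_(j < n) (M i j * P j k).

Definition has_gradient {n} (f : vec n -> R) (G : vec n -> vec n) : Prop :=
  forall x : vec n, forall eps, 0 < eps -> exists delta, 0 < delta /\
    forall h : vec n, vnorm h < delta ->
      Rabs (f (vadd x h) - f x - dot (G x) h) <= eps * vnorm h.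

Definition vcontinuous {n} (F : vec n -> R) : Prop :=
  forall x : vec n, forall eps, 0 < eps -> exists delta, 0 < delta /\
    forall y : vec n, vnorm (vsub y x) < delta -> Rabs (F y - F x) < eps.

Definition is_C1 {n} (f : vec n -> R) (G : vec n -> vec n) : Prop :=
  has_gradient f G /\ forall i, vcontinuous (fun x => G x i).

Definition is_C2 {n} (f : vec n -> R) (G : vec n -> vec n) (H : vec n -> mat n n) : Prop :=
  is_C1 f G /\ forall i, is_C1 (fun x => G x i) (fun x j => H x i j).

Definition concave_fun {n} (f : vec n -> R) : Prop :=
  forall (x y : vec n) l, 0 <= l <= 1 ->
    l * f x + (1 - l) * f y <= f (vadd (vscale l x) (vscale (1 - l) y)).

Definition strictly_convex_fun {n} (f : vec n -> R) : Prop :=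
  forall (x y : vec n) l, x <> y -> 0 < l < 1 ->
    f (vadd (vscale l x) (vscale (1 - l) y)) < l * f x + (1 - l) * f y.

Definition full_row_rank {m n} (M : mat m n) : Prop :=
  forall lam : vec m, (forall j, trmv M lam j = 0) -> forall i, lam i = 0.

(* Horizontal block matrix [ v | M1 | M2 ] in R^{N x (1 + D + N)}. *)
Definition blk3 {N D} (v : vec N) (M1 : mat N D) (M2 : mat N N) : mat N (1 + D + N) :=
  fun i k => match split k with
             | inl k1 => match split k1 with
                         | inl _ => v i
                         | inr j => M1 i j
                         end
             | inr j => M2 i j
             end.

Definition Ct {N D} (mu : vec N) (sigma : mat N D) (ga : vec D -> R) (c : vec N -> R)
  (beta : R) (A : vec N) (gamma : vec D) : Prop :=
  forall Abar : vec N,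
    beta * dot (vsub Abar A) mu
      + ga (vadd gamma (vscale beta (trmv sigma (vsub Abar A)))) - c Abar
    <= ga gamma - c A.

Definition principal_obj {N D} (mu : vec N) (sigma : mat N D) (ga gp : vec D -> R)
  (c : vec N -> R) (A : vec N) (gamma : vec D) : R :=
  dot A mu - c A + ga gamma + gp (vsub (trmv sigma A) gamma).

Definition optimal_contract (T : nat) {N D} (mu : vec N) (sigma : mat N D)
  (ga gp : nat -> vec D -> R) (c : nat -> vec N -> R)
  (At : nat -> vec N) (betat : nat -> R) (gammat : nat -> vec D) : Prop :=
  forall t, (t < T)%N ->
    Ct mu sigma (ga t) (c t) (betat t) (At t) (gammat t) /\
    forall beta (A : vec N) (gamma : vec D),
      Ct mu sigma (ga t) (c t) beta A gamma ->
      principal_obj mu sigma (ga t) (gp t) (c t) A gamma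
        <= principal_obj mu sigma (ga t) (gp t) (c t) (At t) (gammat t).

From Stdlib Require Import Reals Lra Classical FunctionalExtensionality.
From HB Require Import structures.
From mathcomp Require Import ssreflect ssrfun ssrbool eqtype ssrnat seq fintype bigop.
Set Implicit Arguments.
Unset Strict Implicit.
Open Scope R_scope.

(* For fixed [(beta, gamma)] the Agent's payoff from deviating to [Abar] is concave in [Abar],
   so the incentive constraint (that [A] maximises it) holds iff its gradient
   [beta mu - grad c(A) + beta sigma grad g^a(gamma)] vanishes at [A].  The Principal therefore
   maximises a C^1 function of [(beta, gamma, A)] under the N equations "this gradient
   vanishes", whose Jacobian is the full-rank matrix of the hypothesis, and the Lagrange
   multiplier rule yields the remaining three equations once the Hessians of [g^a] and [c]
   are known to be symmetric (Schwarz).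

   If the gradient [g] of the objective were not in
   the row space of the Jacobian [J], there would be [v] with [J v = 0] and [g . v > 0].  With
   [P] a right inverse of [J], the equation [F (x + s v + P w) = 0] is a fixed-point problem
   for the contraction [w |-> w - F (x + s v + P w)], whose solution has [|w| = o(s)]; these
   feasible points improve the objective for small [s > 0].  Strict differentiability is the
   uniform notion of derivative that makes both estimates work. *)

HB.instance Definition _ := Monoid.isComLaw.Build R 0 Rplus
  (fun x y z => esym (Rplus_assoc x y z)) Rplus_comm Rplus_0_l.
HB.instance Definition _ := Monoid.isMulLaw.Build R 0 Rmult Rmult_0_l Rmult_0_r.
HB.instance Definition _ := Monoid.isAddLaw.Build R Rmult Rplus
  Rmult_plus_distr_r Rmult_plus_distr_l.

(** * Finite sums and the l1 norm *)

Lemma sumR_le n (F G : 'I_n -> R) : (forall i, F i <= G i) ->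
  \big[Rplus/0]_(i < n) F i <= \big[Rplus/0]_(i < n) G i.
Proof.
move=> H; apply: (big_ind2 (fun a b => a <= b)) => //; first lra.
by move=> *; apply: Rplus_le_compat.
Qed.

Lemma sumR_ge0 n (F : 'I_n -> R) : (forall i, 0 <= F i) -> 0 <= \big[Rplus/0]_(i < n) F i.
Proof. by move=> H; apply: (big_ind (fun a => 0 <= a)) => //; [lra | move=> *; lra]. Qed.

Lemma Rabs_sumR_le n (F : 'I_n -> R) :
  Rabs (\big[Rplus/0]_(i < n) F i) <= \big[Rplus/0]_(i < n) Rabs (F i).
Proof.
apply: (big_ind2 (fun a b => Rabs a <= b)) => //; first by rewrite Rabs_R0; lra.
- by move=> a b c d H1 H2; apply: Rle_trans (Rabs_triang _ _) _; lra.
- by move=> i _; lra.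
Qed.

Lemma sumR_opp n (F : 'I_n -> R) : \big[Rplus/0]_(i < n) (- F i) = - \big[Rplus/0]_(i < n) F i.
Proof. by rewrite (big_morph Ropp Ropp_plus_distr Ropp_0). Qed.

Lemma sumR_sub n (F G : 'I_n -> R) :
  \big[Rplus/0]_(i < n) (F i - G i) = \big[Rplus/0]_(i < n) F i - \big[Rplus/0]_(i < n) G i.
Proof. by rewrite big_split sumR_opp. Qed.

Lemma sumR_ge_term n (F : 'I_n -> R) j : (forall i, 0 <= F i) -> F j <= \big[Rplus/0]_(i < n) F i.
Proof.
move=> H; rewrite (bigD1 j) //=.
have Hrest : 0 <= \big[Rplus/0]_(i < n | i != j) F i.
  by apply: (big_ind (fun a => 0 <= a)) => //; [lra | move=> *; lra].
by rewrite -{1}(Rplus_0_r (F j)); apply: Rplus_le_compat_l.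
Qed.

Lemma sumR_kron n (F : 'I_n -> R) j :
  \big[Rplus/0]_(i < n) (F i * (if i == j then 1 else 0)) = F j.
Proof. by rewrite (bigD1 j) //= eqxx big1 => [|i /negPf ->]; lra. Qed.

Lemma Rdiv_succ_le1 x : 0 <= x -> x / (x + 1) <= 1.
Proof.
move=> Hx; apply: (Rmult_le_reg_r (x + 1)); first lra.
have -> : x / (x + 1) * (x + 1) = x by field; lra.
lra.
Qed.

Lemma Rmult_le_half a b e : 0 <= a -> 0 <= b -> e <= b / (2 * (a + 1)) -> a * e <= b / 2.
Proof.
move=> Ha Hb Heb; apply: Rle_trans (Rmult_le_compat_l _ _ _ Ha Heb) _.
have -> : a * (b / (2 * (a + 1))) = b / 2 * (a / (a + 1)) by field; lra.
by have := Rdiv_succ_le1 Ha; nra.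
Qed.

Definition norm1 {n} (h : vec n) := \big[Rplus/0]_(i < n) Rabs (h i).
Definition unitv {n} (j : 'I_n) : vec n := fun i => if i == j then 1 else 0.

Lemma norm1_ge0 n (h : vec n) : 0 <= norm1 h.
Proof. by apply: sumR_ge0 => i; exact: Rabs_pos. Qed.

Lemma Rabs_le_norm1 n (h : vec n) i : Rabs (h i) <= norm1 h.
Proof. by apply: (@sumR_ge_term n (fun i => Rabs (h i))) => k; exact: Rabs_pos. Qed.

Lemma norm1_add n (a b : vec n) : norm1 (vadd a b) <= norm1 a + norm1 b.
Proof. by rewrite /norm1 -big_split; apply: sumR_le => i; exact: Rabs_triang. Qed.

Lemma norm1_scale n c (h : vec n) : norm1 (vscale c h) = Rabs c * norm1 h.
Proof. by rewrite /norm1 big_distrr; apply: eq_bigr => i _ /=; exact: Rabs_mult. Qed.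

Lemma norm1_subC n (a b : vec n) : norm1 (vsub a b) = norm1 (vsub b a).
Proof. by apply: eq_bigr => i _ /=; exact: Rabs_minus_sym. Qed.

Lemma norm1_subxx n (x : vec n) : norm1 (vsub x x) = 0.
Proof. by rewrite /norm1 big1 // => i _; rewrite /vsub Rminus_diag Rabs_R0. Qed.

Lemma norm1_zero n : norm1 (@vzero n) = 0.
Proof. by rewrite /norm1 big1 // => i _; rewrite /vzero Rabs_R0. Qed.

Lemma norm1_sub_triangle n (a b c : vec n) :
  norm1 (vsub a c) <= norm1 (vsub a b) + norm1 (vsub b c).
Proof.
rewrite /norm1 -big_split; apply: sumR_le => i; rewrite /vsub.
have -> : a i - c i = (a i - b i) + (b i - c i) by ring.
exact: Rabs_triang.
Qed.

Lemma norm1_le_sub n (a b : vec n) : norm1 a <= norm1 b + norm1 (vsub a b).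
Proof.
have E : forall c : vec n, vsub c vzero = c.
  by move=> c; apply: functional_extensionality => k; rewrite /vsub /vzero; ring.
by have := norm1_sub_triangle a b vzero; rewrite !E; lra.
Qed.

Lemma norm1_unitv n (j : 'I_n) : norm1 (unitv j) = 1.
Proof.
rewrite /norm1 -(sumR_kron (fun _ => 1) j); apply: eq_bigr => i _ /=; rewrite /unitv.
by case: (i == j); rewrite ?Rabs_R1 ?Rabs_R0; ring.
Qed.

Lemma Rabs_dot_le n (g h : vec n) : Rabs (dot g h) <= norm1 g * norm1 h.
Proof.
apply: Rle_trans (Rabs_sumR_le _) _; rewrite /norm1 big_distrl; apply: sumR_le => i.
rewrite Rabs_mult; apply: Rmult_le_compat_l; [exact: Rabs_pos | exact: Rabs_le_norm1].
Qed.

Lemma Rabs_dot_le_sup n (g h : vec n) B :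
  (forall i, Rabs (g i) <= B) -> Rabs (dot g h) <= B * norm1 h.
Proof.
move=> HB; apply: Rle_trans (Rabs_sumR_le _) _; rewrite /norm1 big_distrr; apply: sumR_le => i.
rewrite Rabs_mult; apply: Rmult_le_compat_r; [exact: Rabs_pos | exact: HB].
Qed.

Lemma dotC n (g h : vec n) : dot g h = dot h g.
Proof. by rewrite /dot; apply: eq_bigr => i _ /=; ring. Qed.

Lemma dot_addr n (g a b : vec n) : dot g (vadd a b) = dot g a + dot g b.
Proof. by rewrite /dot -big_split; apply: eq_bigr => i _ /=; rewrite /vadd; ring. Qed.

Lemma dot_subr n (g a b : vec n) : dot g (vsub a b) = dot g a - dot g b.
Proof. by rewrite /dot -sumR_sub; apply: eq_bigr => i _ /=; rewrite /vsub; ring. Qed.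

Lemma dot_scaler n c (g h : vec n) : dot g (vscale c h) = c * dot g h.
Proof. by rewrite /dot big_distrr; apply: eq_bigr => i _ /=; rewrite /vscale; ring. Qed.

Lemma dot_addl n (a b h : vec n) : dot (vadd a b) h = dot a h + dot b h.
Proof. by rewrite dotC dot_addr !(dotC h). Qed.

Lemma dot_subl n (a b h : vec n) : dot (vsub a b) h = dot a h - dot b h.
Proof. by rewrite dotC dot_subr !(dotC h). Qed.

Lemma dot_scalel n c (a h : vec n) : dot (vscale c a) h = c * dot a h.
Proof. by rewrite dotC dot_scaler dotC. Qed.

Lemma dot0l n (y : vec n) : dot vzero y = 0.
Proof. by rewrite /dot big1 // => i _; rewrite /vzero; ring. Qed.

Lemma dot_unitv n (g : vec n) j : dot g (unitv j) = g j.
Proof. exact: sumR_kron. Qed.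

Lemma vnorm_le_norm1 n (h : vec n) : vnorm h <= norm1 h.
Proof.
rewrite /vnorm -(sqrt_Rsqr (norm1 h)); last exact: norm1_ge0.
apply: sqrt_le_1_alt; rewrite /Rsqr /norm1 big_distrl; apply: sumR_le => i.
have H := Rabs_le_norm1 h i; have H0 := Rabs_pos (h i).
apply: Rle_trans (Rle_abs _) _; rewrite Rabs_mult.
by apply: Rmult_le_compat_l.
Qed.

Definition lincomb n m (P : 'I_m -> vec n) (w : vec m) : vec n :=
  fun k => \big[Rplus/0]_(l < m) (w l * P l k).

Lemma lincomb_sub n m (P : 'I_m -> vec n) a b :
  vsub (lincomb P a) (lincomb P b) = lincomb P (vsub a b).
Proof.
apply: functional_extensionality => k; rewrite /vsub /lincomb -sumR_sub.
by apply: eq_bigr => l _ /=; ring.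
Qed.

Lemma lincomb0 n m (P : 'I_m -> vec n) : lincomb P vzero = vzero.
Proof.
by apply: functional_extensionality => k; rewrite /lincomb big1 // => l _; rewrite /vzero; ring.
Qed.

Lemma norm1_lincomb_le n m (P : 'I_m -> vec n) w :
  norm1 (lincomb P w) <= norm1 w * \big[Rplus/0]_(l < m) norm1 (P l).
Proof.
rewrite big_distrr.
apply: Rle_trans (_ : \big[Rplus/0]_(k < n) \big[Rplus/0]_(l < m) Rabs (w l * P l k) <= _).
  by apply: sumR_le => k; exact: Rabs_sumR_le.
rewrite exchange_big; apply: sumR_le => l; rewrite /norm1 big_distrr; apply: sumR_le => k.
by rewrite Rabs_mult; apply: Rmult_le_compat_r; [exact: Rabs_pos | exact: Rabs_le_norm1].
Qed.

Lemma dot_lincomb_dual n m (J P : 'I_m -> vec n) w i :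
  (forall i l, dot (J i) (P l) = if i == l then 1 else 0) -> dot (J i) (lincomb P w) = w i.
Proof.
move=> HJP; rewrite /dot /lincomb.
under eq_bigr do rewrite big_distrr.
rewrite exchange_big -(sumR_kron w i).
apply: eq_bigr => l _; rewrite eq_sym -HJP /dot big_distrr.
by apply: eq_bigr => k _ /=; ring.
Qed.

Lemma dot_lincombl n m (M : 'I_m -> vec n) (g : vec m) h :
  dot (lincomb M g) h = \big[Rplus/0]_(j < m) (g j * dot (M j) h).
Proof.
rewrite /dot /lincomb; under eq_bigr do rewrite big_distrl.
by rewrite exchange_big; apply: eq_bigr => j _; rewrite big_distrr; apply: eq_bigr => k _ /=; ring.
Qed.

Lemma exists_pos_lt2 a b : 0 < a -> 0 < b -> exists s, 0 < s /\ s < a /\ s < b.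
Proof.
move=> Ha Hb; exists (Rmin a b / 2).
by have := Rmin_pos _ _ Ha Hb; have := Rmin_l a b; have := Rmin_r a b; lra.
Qed.

Lemma exists_delta_fin m (P : 'I_m -> R -> Prop) :
  (forall j d d', 0 < d' <= d -> P j d -> P j d') ->
  (forall j, exists d, 0 < d /\ P j d) -> exists d, 0 < d /\ forall j, P j d.
Proof.
move=> Hmon Hex.
suff [d [Hd Hs]] : exists d, 0 < d /\ forall j, j \in index_enum 'I_m -> P j d.
  by exists d; split => // j; apply: Hs; exact: mem_index_enum.
elim: (index_enum 'I_m) => [|j s [ds [Hds Hs]]]; first by exists 1; split => //; lra.
have [dj [Hdj Hj]] := Hex j.
exists (Rmin dj ds); split; first exact: Rmin_pos.
move=> k; rewrite in_cons => /orP [/eqP -> | Hk].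
  by apply: Hmon Hj; split; [exact: Rmin_pos | exact: Rmin_l].
by apply: Hmon (Hs k Hk); split; [exact: Rmin_pos | exact: Rmin_r].
Qed.

(** * Strict differentiability *)

Definition is_strict_grad n (f : vec n -> R) (g : vec n) (x : vec n) :=
  forall eps, 0 < eps -> exists del, 0 < del /\ forall a b : vec n,
    norm1 (vsub a x) < del -> norm1 (vsub b x) < del ->
    Rabs (f a - f b - dot g (vsub a b)) <= eps * norm1 (vsub a b).

Definition line n (y w : vec n) (t : R) : vec n := fun k => y k + t * w k.

Lemma derivable_line n (f : vec n -> R) G : has_gradient f G -> forall y w t,
  derivable_pt_lim (fun s => f (line y w s)) t (dot (G (line y w t)) w).
Proof.
move=> Hg y w t eps Heps.
have Hw := norm1_ge0 w; have HK : 0 < norm1 w + 1 by lra.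
pose e := eps / (2 * (norm1 w + 1)).
have He : 0 < e by apply: Rdiv_lt_0_compat; lra.
have [d [Hd Hf]] := Hg (line y w t) e He.
exists (mkposreal (d / (norm1 w + 1)) (Rdiv_lt_0_compat _ _ Hd HK)) => h Hh0 /= Hh.
have Hah : 0 < Rabs h by apply: Rabs_pos_lt.
have Hn : vnorm (vscale h w) <= Rabs h * norm1 w by rewrite -norm1_scale; exact: vnorm_le_norm1.
have Hlt : vnorm (vscale h w) < d.
  have := Rmult_lt_compat_r _ _ _ HK Hh.
  have -> : d / (norm1 w + 1) * (norm1 w + 1) = d by field; lra.
  by nra.
have Ev : line y w (t + h) = vadd (line y w t) (vscale h w).
  by apply: functional_extensionality => k; rewrite /line /vadd /vscale; ring.
have := Hf _ Hlt; rewrite -Ev dot_scaler => Hrem.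
have -> : (f (line y w (t + h)) - f (line y w t)) / h - dot (G (line y w t)) w
    = (f (line y w (t + h)) - f (line y w t) - h * dot (G (line y w t)) w) * / h by field.
rewrite Rabs_mult Rabs_inv; apply: (Rmult_lt_reg_r (Rabs h)) => //.
rewrite Rmult_assoc Rinv_l ?Rmult_1_r; last lra.
have := Rmult_le_half Hw (Rlt_le _ _ Heps) (Rle_refl e).
have := Rmult_le_compat_l _ _ _ (Rlt_le _ _ He) Hn.
by nra.
Qed.

Lemma norm1_line_sub n (a b x : vec n) c : 0 <= c <= 1 ->
  norm1 (vsub (line b (vsub a b) c) x) <= c * norm1 (vsub a x) + (1 - c) * norm1 (vsub b x).
Proof.
move=> Hc.
have -> : vsub (line b (vsub a b) c) x = vadd (vscale c (vsub a x)) (vscale (1 - c) (vsub b x)).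
  apply: functional_extensionality => k; rewrite /line /vsub /vadd /vscale; ring.
apply: Rle_trans (norm1_add _ _) _; rewrite !norm1_scale !Rabs_right; try lra.
Qed.

Lemma vcontinuous_norm1 n (F : vec n -> R) x eps : vcontinuous F -> 0 < eps ->
  exists d, 0 < d /\ forall y, norm1 (vsub y x) < d -> Rabs (F y - F x) < eps.
Proof.
move=> HF He; have [d [Hd H]] := HF x eps He; exists d; split => // y Hy.
apply: H; apply: Rle_lt_trans (vnorm_le_norm1 _) Hy.
Qed.

(* Mean value theorem on the segment [[b, a]] for [f] minus its linearisation at [x]. *)
Lemma is_C1_strict_grad n (f : vec n -> R) G : is_C1 f G -> forall x, is_strict_grad f (G x) x.
Proof.
move=> [Hg Hc] x eps He.
have [d [Hd Hd2]] : exists d, 0 < d /\ forall k, forall y, norm1 (vsub y x) < d -> Rabs (G y k - G x k) < eps.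
  have [d0 [Hd0 H0]] := @exists_delta_fin n (fun k d => forall y, norm1 (vsub y x) < d -> Rabs (G y k - G x k) < eps)
    ltac:(move=> k d0 d' Hdd H y Hy; apply: H; lra)
    ltac:(move=> k; exact: vcontinuous_norm1 (Hc k) He).
  by exists d0.
exists d; split => // a b Ha Hb.
pose h := vsub a b.
pose phi := fun s => f (line b h s) - dot (G x) h * s.
have Hder : forall c, 0 <= c <= 1 -> derivable_pt_lim phi c (dot (G (line b h c)) h - dot (G x) h * 1).
  move=> c _; apply: derivable_pt_lim_minus; first exact: derivable_line.
  apply: derivable_pt_lim_scal; exact: derivable_pt_lim_id.
have [c [Hmvt Hc01]] := MVT_cor2 phi _ 0 1 Rlt_0_1 Hder.
have E1 : line b h 1 = a by apply: functional_extensionality => k; rewrite /line /h /vsub; ring.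
have E0 : line b h 0 = b by apply: functional_extensionality => k; rewrite /line /h /vsub; ring.
have -> : f a - f b - dot (G x) (vsub a b) = phi 1 - phi 0 by rewrite /phi E1 E0 /h; ring.
rewrite Hmvt.
have -> : (dot (G (line b h c)) h - dot (G x) h * 1) * (1 - 0) = dot (vsub (G (line b h c)) (G x)) h.
  by rewrite dot_subl; ring.
apply: Rabs_dot_le_sup => k; rewrite /vsub; apply: Rlt_le; apply: Hd2.
apply: Rle_lt_trans (norm1_line_sub a b x (conj (Rlt_le _ _ (proj1 Hc01)) (Rlt_le _ _ (proj2 Hc01)))) _.
nra.
Qed.

Lemma strict_grad_lipschitz n (f : vec n -> R) g x : is_strict_grad f g x ->
  exists d, 0 < d /\ forall a b, norm1 (vsub a x) < d -> norm1 (vsub b x) < d ->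
    Rabs (f a - f b) <= (norm1 g + 1) * norm1 (vsub a b).
Proof.
move=> H; have [d [Hd Hf]] := H 1 Rlt_0_1; exists d; split => // a b Ha Hb.
have := Hf a b Ha Hb; have := Rabs_dot_le g (vsub a b).
have := Rabs_triang (f a - f b - dot g (vsub a b)) (dot g (vsub a b)).
have -> : f a - f b - dot g (vsub a b) + dot g (vsub a b) = f a - f b by ring.
lra.
Qed.

Lemma strict_grad_continuous n (f : vec n -> R) g x eta : is_strict_grad f g x -> 0 < eta ->
  exists d, 0 < d /\ forall a, norm1 (vsub a x) < d -> Rabs (f a - f x) <= eta.
Proof.
move=> H He; have [d [Hd Hf]] := strict_grad_lipschitz H.
have HK : 0 < norm1 g + 1 by have := norm1_ge0 g; lra.
exists (Rmin d (eta / (norm1 g + 1))); split.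
  apply: Rmin_pos => //; exact: Rdiv_lt_0_compat.
move=> a Ha.
have Ha1 : norm1 (vsub a x) < d by apply: Rlt_le_trans Ha (Rmin_l _ _).
have Ha2 : norm1 (vsub a x) < eta / (norm1 g + 1) by apply: Rlt_le_trans Ha (Rmin_r _ _).
have Hx : norm1 (vsub x x) < d by rewrite norm1_subxx.
apply: Rle_trans (Hf a x Ha1 Hx) _.
have := Rmult_le_compat_l _ _ _ (Rlt_le _ _ HK) (Rlt_le _ _ Ha2).
by have -> : (norm1 g + 1) * (eta / (norm1 g + 1)) = eta by field; lra.
Qed.

Lemma is_strict_grad_ext n (f f' : vec n -> R) g g' x :
  (forall a, f a = f' a) -> (forall k, g k = g' k) -> is_strict_grad f g x -> is_strict_grad f' g' x.
Proof.
move=> Hf Hg H eps He; have [d [Hd H1]] := H eps He; exists d; split => // a b Ha Hb.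
rewrite -!Hf; have -> : dot g' (vsub a b) = dot g (vsub a b).
  by apply: eq_bigr => i _; rewrite Hg.
exact: H1.
Qed.

Lemma is_strict_grad_dot n (w : vec n) x : is_strict_grad (fun a => dot w a) w x.
Proof.
move=> eps He; exists 1; split; first lra; move=> a b _ _.
rewrite dot_subr; have -> : dot w a - dot w b - (dot w a - dot w b) = 0 by ring.
rewrite Rabs_R0; have := norm1_ge0 (vsub a b); nra.
Qed.

Lemma is_strict_grad_const n (c : R) x : is_strict_grad (fun _ : vec n => c) vzero x.
Proof.
move=> eps He; exists 1; split; first lra; move=> a b _ _.
have -> : dot vzero (vsub a b) = 0 by exact: dot0l.
have -> : c - c - 0 = 0 by ring.
rewrite Rabs_R0; have := norm1_ge0 (vsub a b); nra.
Qed.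

Lemma is_strict_grad_coord n (j : 'I_n) x : is_strict_grad (fun a => a j) (unitv j) x.
Proof.
apply: (@is_strict_grad_ext n (fun a => dot (unitv j) a)) (is_strict_grad_dot _ _) => // a.
by rewrite dotC dot_unitv.
Qed.

Lemma is_strict_grad_add n (f u : vec n -> R) g q x : is_strict_grad f g x -> is_strict_grad u q x ->
  is_strict_grad (fun a => f a + u a) (vadd g q) x.
Proof.
move=> Hf Hu eps He.
have [d1 [Hd1 H1]] := Hf (eps / 2) ltac:(lra).
have [d2 [Hd2 H2]] := Hu (eps / 2) ltac:(lra).
exists (Rmin d1 d2); split; first exact: Rmin_pos.
move=> a b /Rmin_Rgt_l [Ha1 Ha2] /Rmin_Rgt_l [Hb1 Hb2].
have := H1 a b Ha1 Hb1; have := H2 a b Ha2 Hb2; rewrite dot_addl.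
have := Rabs_triang (f a - f b - dot g (vsub a b)) (u a - u b - dot q (vsub a b)).
have -> : f a - f b - dot g (vsub a b) + (u a - u b - dot q (vsub a b)) =
  f a + u a - (f b + u b) - (dot g (vsub a b) + dot q (vsub a b)) by ring.
lra.
Qed.

Lemma is_strict_grad_scal n (f : vec n -> R) g x (r : R) : is_strict_grad f g x ->
  is_strict_grad (fun a => r * f a) (vscale r g) x.
Proof.
move=> Hf eps He.
have [d [Hd H1]] := Hf (eps / (Rabs r + 1)) ltac:(apply: Rdiv_lt_0_compat; have := Rabs_pos r; lra).
exists d; split => // a b Ha Hb.
rewrite dot_scalel.
have -> : r * f a - r * f b - r * dot g (vsub a b) = r * (f a - f b - dot g (vsub a b)) by ring.
rewrite Rabs_mult.
have Hr := Rabs_pos r.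
apply: Rle_trans (Rmult_le_compat_l _ _ _ Hr (H1 a b Ha Hb)) _.
have Hn := norm1_ge0 (vsub a b).
have -> : Rabs r * (eps / (Rabs r + 1) * norm1 (vsub a b)) = (Rabs r / (Rabs r + 1)) * eps * norm1 (vsub a b) by field; lra.
apply: Rmult_le_compat_r => //; have := Rdiv_succ_le1 Hr; nra.
Qed.

Lemma Rabs_mult_le a b A B : Rabs a <= A -> Rabs b <= B -> Rabs (a * b) <= A * B.
Proof. by move=> Ha Hb; rewrite Rabs_mult; apply: Rmult_le_compat => //; exact: Rabs_pos. Qed.

Lemma is_strict_grad_mul n (f u : vec n -> R) g q x : is_strict_grad f g x -> is_strict_grad u q x ->
  is_strict_grad (fun a => f a * u a) (fun k => f x * q k + u x * g k) x.
Proof.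
move=> Hf Hu eps He.
pose K := Rabs (f x) + Rabs (u x) + 2 + norm1 q + norm1 g.
have HK : 0 < K.
  by have := norm1_ge0 q; have := norm1_ge0 g; have := Rabs_pos (f x); have := Rabs_pos (u x); rewrite /K; lra.
pose eta := Rmin 1 (eps / K).
have Heta : 0 < eta by apply: Rmin_pos; [lra | exact: Rdiv_lt_0_compat].
have Heta1 : eta <= 1 by exact: Rmin_l.
have HetaK : eta * K <= eps.
  have := Rmult_le_compat_r K _ _ (Rlt_le _ _ HK) (Rmin_r 1 (eps / K)).
  by have -> : eps / K * K = eps by field; lra.
have [d1 [Hd1 H1]] := Hf eta Heta.
have [d2 [Hd2 H2]] := Hu eta Heta.
have [d3 [Hd3 H3]] := strict_grad_continuous Hf Heta.
have [d4 [Hd4 H4]] := strict_grad_continuous Hu Heta.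
exists (Rmin (Rmin d1 d2) (Rmin d3 d4)); split; first by repeat apply: Rmin_pos.
move=> a b /Rmin_Rgt_l [/Rmin_Rgt_l [Ha1 Ha2] /Rmin_Rgt_l [Ha3 _]].
move=> /Rmin_Rgt_l [/Rmin_Rgt_l [Hb1 Hb2] /Rmin_Rgt_l [_ Hb4]].
set h := vsub a b.
have -> : f a * u a - f b * u b - dot (fun k => f x * q k + u x * g k) h =
   f a * (u a - u b - dot q h) + (f a - f x) * dot q h
   + u b * (f a - f b - dot g h) + (u b - u x) * dot g h.
  have -> : dot (fun k => f x * q k + u x * g k) h = f x * dot q h + u x * dot g h.
    by rewrite /dot !big_distrr -big_split; apply: eq_bigr => i _ /=; ring.
  ring.
have Hfa : Rabs (f a) <= Rabs (f x) + 1 by have := Rabs_triang_inv (f a) (f x); have := H3 a Ha3; lra.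
have Hub : Rabs (u b) <= Rabs (u x) + 1 by have := Rabs_triang_inv (u b) (u x); have := H4 b Hb4; lra.
have T1 := Rabs_mult_le Hfa (H2 a b Ha2 Hb2).
have T2 := Rabs_mult_le (H3 a Ha3) (Rabs_dot_le q h).
have T3 := Rabs_mult_le Hub (H1 a b Ha1 Hb1).
have T4 := Rabs_mult_le (H4 b Hb4) (Rabs_dot_le g h).
set A1 := f a * _ in T1 *; set A2 := (f a - f x) * _ in T2 *.
set A3 := u b * _ in T3 *; set A4 := (u b - u x) * _ in T4 *.
have S1 := Rabs_triang (A1 + A2 + A3) A4.
have S2 := Rabs_triang (A1 + A2) A3.
have S3 := Rabs_triang A1 A2.
have := Rmult_le_compat_r _ _ _ (norm1_ge0 h) HetaK.
rewrite -/h /K in T1 T3 *; lra.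
Qed.

Lemma strict_grad_uniform n m (Phi : 'I_m -> vec n -> R) (M : 'I_m -> vec n) x eps :
  (forall j, is_strict_grad (Phi j) (M j) x) -> 0 < eps ->
  exists d, 0 < d /\ forall j a b, norm1 (vsub a x) < d -> norm1 (vsub b x) < d ->
    Rabs (Phi j a - Phi j b - dot (M j) (vsub a b)) <= eps * norm1 (vsub a b).
Proof.
move=> HP He; apply: exists_delta_fin => [j d d' Hdd H a b Ha Hb | j]; last exact: HP.
by apply: H; lra.
Qed.

Lemma strict_grad_family_lipschitz n m (Phi : 'I_m -> vec n -> R) (M : 'I_m -> vec n) x :
  (forall j, is_strict_grad (Phi j) (M j) x) ->
  exists d, 0 < d /\ forall a b, norm1 (vsub a x) < d -> norm1 (vsub b x) < d ->
    norm1 (vsub (fun j => Phi j a) (fun j => Phi j b))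
      <= \big[Rplus/0]_(j < m) (norm1 (M j) + 1) * norm1 (vsub a b).
Proof.
move=> HP.
have [d [Hd HL]] := @exists_delta_fin m (fun j d => forall a b,
    norm1 (vsub a x) < d -> norm1 (vsub b x) < d ->
    Rabs (Phi j a - Phi j b) <= (norm1 (M j) + 1) * norm1 (vsub a b))
  ltac:(move=> j d d' Hdd H a b Ha Hb; apply: H; lra)
  (fun j => strict_grad_lipschitz (HP j)).
exists d; split => // a b Ha Hb; rewrite big_distrl; apply: sumR_le => j; exact: HL.
Qed.

Lemma strict_grad_family_continuous n m (Phi : 'I_m -> vec n -> R) (M : 'I_m -> vec n) x e :
  (forall j, is_strict_grad (Phi j) (M j) x) -> 0 < e ->
  exists d, 0 < d /\ forall a, norm1 (vsub a x) < d ->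
    norm1 (vsub (fun j => Phi j a) (fun j => Phi j x)) < e.
Proof.
move=> HP He; have [dL [HdL HL]] := strict_grad_family_lipschitz HP.
set K := \big[Rplus/0]_(j < m) _ in HL.
have HK : 0 <= K by apply: sumR_ge0 => j; have := norm1_ge0 (M j); lra.
exists (Rmin dL (e / (K + 1))); split; first by apply: Rmin_pos => //; apply: Rdiv_lt_0_compat; lra.
move=> a /Rmin_Rgt_l [Ha Ha']; have Hx : norm1 (vsub x x) < dL by rewrite norm1_subxx.
apply: Rle_lt_trans (HL a x Ha Hx) _.
have := Rmult_lt_compat_l (K + 1) _ _ ltac:(lra) Ha'.
have -> : (K + 1) * (e / (K + 1)) = e by field; lra.
by have := norm1_ge0 (vsub a x); nra.
Qed.

Lemma is_strict_grad_comp n m (Phi : 'I_m -> vec n -> R) (M : 'I_m -> vec n) (f : vec m -> R) g x :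
  (forall j, is_strict_grad (Phi j) (M j) x) -> is_strict_grad f g (fun j => Phi j x) ->
  is_strict_grad (fun a => f (fun j => Phi j a)) (lincomb M g) x.
Proof.
move=> HP Hf eps He.
have [dL [HdL HL]] := strict_grad_family_lipschitz HP.
set K := \big[Rplus/0]_(j < m) _ in HL.
have HK : 0 <= K by apply: sumR_ge0 => j; have := norm1_ge0 (M j); lra.
have Hg := norm1_ge0 g.
pose e1 := eps / (2 * (K + 1)); pose e2 := eps / (2 * (norm1 g + 1)).
have He1 : 0 < e1 by apply: Rdiv_lt_0_compat; lra.
have He2 : 0 < e2 by apply: Rdiv_lt_0_compat; lra.
have [df [Hdf Hff]] := Hf e1 He1.
have [d2 [Hd2 H2]] := strict_grad_uniform HP He2.
have [d3 [Hd3 H3]] := strict_grad_family_continuous HP Hdf.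
exists (Rmin dL (Rmin d2 d3)); split; first by repeat apply: Rmin_pos.
move=> a b /Rmin_Rgt_l [Ha1 /Rmin_Rgt_l [Ha2 Ha3]] /Rmin_Rgt_l [Hb1 /Rmin_Rgt_l [Hb2 Hb3]].
set h := vsub a b; set ya := fun j => Phi j a; set yb := fun j => Phi j b.
(* The chain-rule remainder splits into the outer remainder and a [g]-weighted sum of the inner ones. *)
set R2 := \big[Rplus/0]_(j < m) (g j * (Phi j a - Phi j b - dot (M j) h)).
have -> : f ya - f yb - dot (lincomb M g) h = (f ya - f yb - dot g (vsub ya yb)) + R2.
  have -> : R2 = dot g (vsub ya yb) - dot (lincomb M g) h.
    by rewrite dot_lincombl /R2 /dot -sumR_sub; apply: eq_bigr => j _ /=; rewrite /vsub /ya /yb; ring.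
  ring.
have B1 := Hff ya yb (H3 a Ha3) (H3 b Hb3).
have B2 := Rmult_le_compat_l _ _ _ (Rlt_le _ _ He1) (HL a b Ha1 Hb1).
have B3 : Rabs R2 <= norm1 g * (e2 * norm1 h).
  apply: Rle_trans (Rabs_sumR_le _) _; rewrite /norm1 big_distrl; apply: sumR_le => j.
  by apply: Rabs_mult_le; [lra | exact: H2].
have C1 := Rmult_le_half HK (Rlt_le _ _ He) (Rle_refl e1).
have C2 := Rmult_le_half Hg (Rlt_le _ _ He) (Rle_refl e2).
have := Rabs_triang (f ya - f yb - dot g (vsub ya yb)) R2.
have := norm1_ge0 h; rewrite -/h -/ya -/yb in B2; nra.
Qed.

Lemma is_strict_grad_sum n m (F : 'I_m -> vec n -> R) (G : 'I_m -> vec n) x :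
  (forall j, is_strict_grad (F j) (G j) x) ->
  is_strict_grad (fun a => \big[Rplus/0]_(j < m) F j a) (fun k => \big[Rplus/0]_(j < m) G j k) x.
Proof.
move=> H.
have := @is_strict_grad_comp n m F G (fun y => dot (fun _ => 1) y) (fun _ => 1) x H (is_strict_grad_dot _ _).
by apply: is_strict_grad_ext => [a | k]; apply: eq_bigr => j _ /=; ring.
Qed.

Lemma is_strict_grad_sub n (f u : vec n -> R) g q x : is_strict_grad f g x -> is_strict_grad u q x ->
  is_strict_grad (fun a => f a - u a) (vsub g q) x.
Proof.
move=> Hf Hu; have := is_strict_grad_add Hf (is_strict_grad_scal (-1) Hu).
apply: is_strict_grad_ext => [a | k]; rewrite /vadd /vscale /vsub; ring.
Qed.

Lemma line0 n (y w : vec n) : line y w 0 = y.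
Proof. apply: functional_extensionality => k; rewrite /line; ring. Qed.

Lemma MVT_line_diff n (f : vec n -> R) G : has_gradient f G -> forall y1 y0 w b, 0 < b ->
  exists c, 0 < c < b /\
   (f (line y1 w b) - f (line y0 w b)) - (f y1 - f y0) =
     (dot (G (line y1 w c)) w - dot (G (line y0 w c)) w) * b.
Proof.
move=> Hg y1 y0 w b Hb.
have [c [H1 H2]] := MVT_cor2 (fun s => f (line y1 w s) - f (line y0 w s))
  (fun s => dot (G (line y1 w s)) w - dot (G (line y0 w s)) w) 0 b Hb
  (fun c _ => derivable_pt_lim_minus _ _ _ _ _ (derivable_line Hg y1 w c) (derivable_line Hg y0 w c)).
exists c; split => //; rewrite !line0 in H1; rewrite H1; ring.
Qed.

Lemma norm1_unitv2 n (i j : 'I_n) a b : norm1 (vadd (vscale a (unitv i)) (vscale b (unitv j))) <= Rabs a + Rabs b.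
Proof. apply: Rle_trans (norm1_add _ _) _; rewrite !norm1_scale !norm1_unitv; lra. Qed.

Lemma second_difference_approx n (f : vec n -> R) G H x i j e : has_gradient f G ->
  is_strict_grad (fun y => G y i) (fun k => H x i k) x -> 0 < e -> exists d, 0 < d /\ forall s, 0 < s -> 2 * s < d ->
  Rabs ((f (line (line x (unitv j) s) (unitv i) s) - f (line x (unitv i) s)) - (f (line x (unitv j) s) - f x)
         - s * s * H x i j) <= e * s * s.
Proof.
move=> Hg Si He; have [d [Hd Hi]] := Si e He; exists d; split => // s Hs Hsd.
have [c [Hc E]] := MVT_line_diff Hg (line x (unitv j) s) x (unitv i) Hs.
rewrite E !dot_unitv.
set p1 := line (line x (unitv j) s) (unitv i) c.
set p0 := line x (unitv i) c.
have D10 : vsub p1 p0 = vscale s (unitv j)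
  by apply: functional_extensionality => k; rewrite /p1 /p0 /line /vsub /vscale; ring.
have D1 : vsub p1 x = vadd (vscale c (unitv i)) (vscale s (unitv j))
  by apply: functional_extensionality => k; rewrite /p1 /line /vsub /vscale /vadd; ring.
have D0 : vsub p0 x = vscale c (unitv i)
  by apply: functional_extensionality => k; rewrite /p0 /line /vsub /vscale; ring.
have N1 : norm1 (vsub p1 x) < d.
  rewrite D1; apply: Rle_lt_trans (norm1_unitv2 _ _ _ _) _; rewrite !Rabs_right; lra.
have N0 : norm1 (vsub p0 x) < d by rewrite D0 norm1_scale norm1_unitv Rabs_right; lra.
have := Hi p1 p0 N1 N0; rewrite D10 dot_scaler dot_unitv norm1_scale norm1_unitv (Rabs_right s); last lra.
move=> HH.
have -> : (G p1 i - G p0 i) * s - s * s * H x i j = s * (G p1 i - G p0 i - s * H x i j) by ring.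
rewrite Rabs_mult Rabs_right; last lra.
have := Rmult_le_compat_l s _ _ (Rlt_le _ _ Hs) HH; lra.
Qed.

(* Schwarz: the mixed second difference [f(x + s e_i + s e_j) - f(x + s e_i) - f(x + s e_j) + f(x)]
   is symmetric in [i, j] and equals [s^2 H x i j + o(s^2)]. *)
Lemma hessian_sym n (f : vec n -> R) G H : is_C2 f G H -> forall x i j, H x i j = H x j i.
Proof.
move=> [[Hg _] HC] x i j.
have Si := is_C1_strict_grad (HC i) x.
have Sj := is_C1_strict_grad (HC j) x.
apply: NNPP => Hne.
set e := Rabs (H x i j - H x j i) / 4.
have He : 0 < e by rewrite /e; apply: Rdiv_lt_0_compat; [apply: Rabs_pos_lt; lra | lra].
have [d1 [Hd1 H1]] := second_difference_approx j Hg Si He.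
have [d2 [Hd2 H2]] := second_difference_approx i Hg Sj He.
set s := Rmin d1 d2 / 3.
have Hs : 0 < s by rewrite /s; apply: Rdiv_lt_0_compat; [exact: Rmin_pos | lra].
have Hs1 : 2 * s < d1 by have := Rmin_l d1 d2; rewrite /s; lra.
have Hs2 : 2 * s < d2 by have := Rmin_r d1 d2; rewrite /s; lra.
have A1 := H1 s Hs Hs1; have A2 := H2 s Hs Hs2.
have Esw : line (line x (unitv j) s) (unitv i) s = line (line x (unitv i) s) (unitv j) s
  by apply: functional_extensionality => k; rewrite /line; ring.
rewrite Esw in A1.
set X := f (line (line x (unitv i) s) (unitv j) s) in A1 A2.
have : Rabs (s * s * H x i j - s * s * H x j i) <= 2 * e * s * s.
  have := Rabs_triang ((X - f (line x (unitv j) s)) - (f (line x (unitv i) s) - f x) - s * s * H x j i)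
     (- ((X - f (line x (unitv i) s)) - (f (line x (unitv j) s) - f x) - s * s * H x i j)).
  rewrite Rabs_Ropp.
  have -> : (X - f (line x (unitv j) s)) - (f (line x (unitv i) s) - f x) - s * s * H x j i
     + - ((X - f (line x (unitv i) s)) - (f (line x (unitv j) s) - f x) - s * s * H x i j)
     = s * s * H x i j - s * s * H x j i by ring.
  lra.
have -> : s * s * H x i j - s * s * H x j i = (s * s) * (H x i j - H x j i) by ring.
rewrite Rabs_mult (Rabs_right (s * s)); last nra.
rewrite /e => HH.
have Hss : 0 < s * s by nra.
have Hp : 0 < Rabs (H x i j - H x j i) by apply: Rabs_pos_lt; lra.
nra.
Qed.


(** * Geometric sequences and contractions *)

Lemma pow_half_pos k : 0 < (/ 2) ^ k.
Proof. by apply: pow_lt; lra. Qed.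

Lemma le_of_le_add_pow_half X Y C : 0 <= C -> (forall k, X <= Y + C * (/ 2) ^ k) -> X <= Y.
Proof.
move=> HC H; apply: Rnot_lt_le => Hlt.
have [N HN] := pow_lt_1_zero (/ 2) ltac:(rewrite Rabs_right; lra) ((X - Y) / (C + 1))
  ltac:(apply: Rdiv_lt_0_compat; lra).
have := HN N (le_n N); have := H N; have := pow_half_pos N.
rewrite Rabs_right; last by have := pow_half_pos N; lra.
move=> Hp H1 H2.
have : (C + 1) * (/ 2) ^ N < (C + 1) * ((X - Y) / (C + 1)) by apply: Rmult_lt_compat_l; lra.
have -> : (C + 1) * ((X - Y) / (C + 1)) = X - Y by field; lra.
nra.
Qed.

Lemma Rabs_lim_le u l c B N : Un_cv u l -> (forall p, (N <= p)%N -> Rabs (u p - c) <= B) ->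
  Rabs (l - c) <= B.
Proof.
move=> Hu Hb; apply: Rnot_lt_le => Hlt.
have [p0 Hp0] := Hu (Rabs (l - c) - B) ltac:(lra).
have H1 := Hp0 (maxn p0 N) ltac:(apply/leP; exact: leq_maxl).
have H2 := Hb (maxn p0 N) (leq_maxr _ _).
rewrite /R_dist Rabs_minus_sym in H1.
have := Rabs_triang (l - u (maxn p0 N)) (u (maxn p0 N) - c).
have -> : l - u (maxn p0 N) + (u (maxn p0 N) - c) = l - c by ring.
lra.
Qed.

Lemma norm1_le_sup n (h : vec n) B : (forall i, Rabs (h i) <= B) -> norm1 h <= INR n * B.
Proof.
move=> HB; apply: Rle_trans (sumR_le (G := fun _ => B) HB) _.
rewrite big_const_ord; elim: n {h HB} => [|n IHn]; first by rewrite /=; lra.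
by rewrite S_INR /=; lra.
Qed.

Lemma geometric_cauchy_lim m (w : nat -> vec m) C :
  (forall q p, (q <= p)%N -> norm1 (vsub (w p) (w q)) <= C * (/ 2) ^ q) ->
  exists l : vec m, forall k, norm1 (vsub l (w k)) <= INR m * (C * (/ 2) ^ k).
Proof.
move=> Cau.
have Hcc : forall i, Cauchy_crit (fun k => w k i).
  move=> i e He.
  have [N HN] := pow_lt_1_zero (/ 2) ltac:(rewrite Rabs_right; lra) (e / (Rabs C + 1))
    ltac:(apply: Rdiv_lt_0_compat; have := Rabs_pos C; lra).
  have Hb : forall a b, (N <= a)%N -> (a <= b)%N -> Rabs (w b i - w a i) < e.
    move=> a b Ha Hab; apply: Rle_lt_trans (Rabs_le_norm1 (vsub (w b) (w a)) i) _.
    apply: Rle_lt_trans (Cau _ _ Hab) _.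
    have := HN a (leP Ha); rewrite Rabs_right; last by have := pow_half_pos a; lra.
    move=> H1; have Hp := pow_half_pos a; have HC := Rle_abs C; have HC0 := Rabs_pos C.
    have : (Rabs C + 1) * (/ 2) ^ a < (Rabs C + 1) * (e / (Rabs C + 1)) by apply: Rmult_lt_compat_l; lra.
    have -> : (Rabs C + 1) * (e / (Rabs C + 1)) = e by field; lra.
    nra.
  exists N => p q /leP Hp /leP Hq; rewrite /R_dist.
  case: (leqP p q) => Hpq; first by rewrite Rabs_minus_sym; apply: Hb.
  by apply: Hb => //; exact: ltnW.
exists (fun i => proj1_sig (R_complete _ (Hcc i))) => k.
apply: norm1_le_sup => i; apply: (Rabs_lim_le (proj2_sig (R_complete _ (Hcc i))) (N := k)) => p Hkp.
by apply: Rle_trans (Rabs_le_norm1 (vsub (w p) (w k)) i) _; exact: Cau.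
Qed.

Section Contraction.
Variables (m : nat) (T : vec m -> vec m) (r : R).
Hypothesis r_ge0 : 0 <= r.
Hypothesis T_contract : forall a b, norm1 a <= r -> norm1 b <= r ->
  norm1 (vsub (T a) (T b)) <= / 2 * norm1 (vsub a b).
Hypothesis T0_small : norm1 (T vzero) <= r / 2.

Let iterate k := iter k T vzero.

Lemma contraction_iterate_bound k :
  norm1 (iterate k) <= r * (1 - (/ 2) ^ k) /\
  norm1 (vsub (iterate k.+1) (iterate k)) <= r * (/ 2) ^ k.+1.
Proof.
elim: k => [|k [IH1 IH2]].
  rewrite /iterate /= norm1_zero; split; first lra.
  have -> : vsub (T vzero) vzero = T vzero.
    by apply: functional_extensionality => i; rewrite /vsub /vzero; ring.
  lra.
have Hp := pow_half_pos k.
have B1 : norm1 (iterate k.+1) <= r * (1 - (/ 2) ^ k.+1).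
  have -> : (/ 2) ^ k.+1 = / 2 * (/ 2) ^ k by [].
  by have := norm1_le_sub (iterate k.+1) (iterate k); rewrite [(/ 2) ^ k.+1]/= in IH2; lra.
split => //.
have Hk1 : norm1 (iterate k.+1) <= r by have := pow_half_pos k.+1; nra.
have Hk : norm1 (iterate k) <= r by nra.
have -> : (/ 2) ^ k.+2 = / 2 * (/ 2) ^ k.+1 by [].
by apply: Rle_trans (T_contract Hk1 Hk) _; lra.
Qed.

Lemma contraction_iterate_cauchy q p : (q <= p)%N ->
  norm1 (vsub (iterate p) (iterate q)) <= r * (/ 2) ^ q.
Proof.
move=> Hqp; rewrite -(subnKC Hqp).
suff Tel : forall j, norm1 (vsub (iterate (q + j)) (iterate q)) <= r * ((/ 2) ^ q - (/ 2) ^ (q + j)).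
  by apply: Rle_trans (Tel _) _; have := pow_half_pos (q + (p - q)); nra.
elim => [|j IH]; first by rewrite addn0 norm1_subxx; lra.
rewrite addnS.
have := norm1_sub_triangle (iterate (q + j).+1) (iterate (q + j)) (iterate q).
by have := proj2 (contraction_iterate_bound (q + j)); rewrite /=; lra.
Qed.

Lemma contraction_fixpoint : exists l, norm1 l <= r /\ forall i, T l i = l i.
Proof.
have [l Hl] := geometric_cauchy_lim contraction_iterate_cauchy.
have Hmr : 0 <= INR m * r by have := pos_INR m; nra.
have Hlr : norm1 l <= r.
  apply: (le_of_le_add_pow_half Hmr) => k.
  have := norm1_le_sub l (iterate k); have := Hl k; have := proj1 (contraction_iterate_bound k).
  by have := pow_half_pos k; nra.
have Hfix : norm1 (vsub (T l) l) <= 0.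
  apply: (le_of_le_add_pow_half Hmr) => k.
  have Hk : norm1 (iterate k) <= r.
    by have := proj1 (contraction_iterate_bound k); have := pow_half_pos k; nra.
  have := norm1_sub_triangle (T l) (T (iterate k)) l.
  have := T_contract Hlr Hk; rewrite (norm1_subC (T (iterate k))).
  have := Hl k; have := Hl k.+1; rewrite [(/ 2) ^ k.+1]/=.
  by have := pow_half_pos k; rewrite /iterate /=; nra.
exists l; split => // i.
have := Rabs_le_norm1 (vsub (T l) l) i; have := Rabs_pos (vsub (T l) l i).
move=> H0 H1; case: (Req_dec (vsub (T l) l i) 0) => [|/Rabs_no_R0 Hn]; first by rewrite /vsub; lra.
by exfalso; apply: Hn; lra.
Qed.

End Contraction.

(** * The Lagrange multiplier rule *)

(* The matrix library is imported locally so that its ring notations do not leak. *)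
Module RowSpace.
From mathcomp Require Import ssralg matrix mxalgebra Rstruct.
Open Scope R_scope.

Lemma rowspan_or_orthogonal (m n : nat) (J : mat m n) (g : vec n) :
  (exists lam : vec m, forall k, g k = \big[Rplus/0]_(i < m) (lam i * J i k)) \/
  (exists v : vec n, (forall i, dot (J i) v = 0) /\ dot g v <> 0).
Proof.
pose Jm : 'M[R]_(m, n) := (\matrix_(i, k) J i k)%R.
pose gm : 'M[R]_(1, n) := (\matrix_(i, k) g k)%R.
case: (boolP (gm <= Jm)%MS) => H.
  left; case/submxP: H => Dm HD; exists (fun i => Dm ord0 i) => k.
  have := congr1 (fun M : 'M[R]_(1, n) => M ord0 k) HD.
  by rewrite /= !mxE => ->; apply: eq_bigr => i _; rewrite mxE.
right; rewrite submxE in H.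
have [k0 Hk0] : exists k0, (gm *m cokermx Jm)%R ord0 k0 <> 0%R.
  apply: NNPP => Hn; move/negP: H; apply; apply/eqP/matrixP => i j.
  by rewrite ord1; apply: NNPP => Hne; apply: Hn; exists j => Heq; apply: Hne; rewrite Heq mxE.
exists (fun k => cokermx Jm k k0); split.
  move=> i; have := congr1 (fun M : 'M[R]_(m, n) => M i k0) (mulmx_coker Jm).
  rewrite /= /dot => H0; transitivity ((Jm *m cokermx Jm)%R i k0); last by rewrite H0 mxE.
  by rewrite mxE; apply: eq_bigr => k _; congr (_ * _); rewrite mxE.
move: Hk0; rewrite mxE => Hk Hd; apply: Hk; rewrite /dot in Hd.
transitivity (\big[Rplus/0]_(i < n) (g i * cokermx Jm i k0)); last exact: Hd.
by apply: eq_bigr => k _; congr (_ * _); rewrite mxE.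
Qed.

Lemma full_row_rank_right_inverse (m n : nat) (J : mat m n) :
  full_row_rank J -> exists P : 'I_m -> vec n, forall i l, dot (J i) (P l) = if i == l then 1 else 0.
Proof.
move=> Hind.
pose Jm : 'M[R]_(m, n) := (\matrix_(i, k) J i k)%R.
have : row_free Jm.
  apply: inj_row_free => v Hv; apply/matrixP => a i; rewrite ord1 mxE.
  apply: (Hind (fun i => v ord0 i)) => k.
  have := congr1 (fun M : 'M[R]_(1, n) => M ord0 k) Hv.
  rewrite /= [in X in _ = X -> _]mxE mxE => H0; apply: eq_trans (H0).
  by apply: eq_bigr => j _; rewrite mxE; apply: Rmult_comm.
case/row_freeP => B HB; exists (fun l k => B k l) => i l.
have := congr1 (fun M : 'M[R]_(m, m) => M i l) HB.
rewrite /= !mxE /dot => H0.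
have -> : (if i == l then 1 else 0) = ((i == l)%:R)%R by case: (i == l).
by rewrite -H0; apply: eq_bigr => k _; congr (_ * _); rewrite mxE.
Qed.

End RowSpace.

Section ConstraintSet.
Variables (n m : nat) (F : 'I_m -> vec n -> R) (J P : 'I_m -> vec n) (x v : vec n).
Hypothesis F_grad : forall i, is_strict_grad (F i) (J i) x.
Hypothesis F_x : forall i, F i x = 0.
Hypothesis JP_dual : forall i l, dot (J i) (P l) = if i == l then 1 else 0.
Hypothesis Jv : forall i, dot (J i) v = 0.

(* [x + s v] moves along the kernel of [J]; the correction [P w] lies in a complement
   on which [J] is the identity, so [F = 0] becomes a fixed-point equation in [w]. *)
Definition kernel_point s w : vec n := fun k => x k + s * v k + lincomb P w k.

Definition newton_step s w : vec m := fun i => w i - F i (kernel_point s w).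

Lemma kernel_point_sub s a b :
  vsub (kernel_point s a) (kernel_point s b) = lincomb P (vsub a b).
Proof.
rewrite -lincomb_sub; apply: functional_extensionality => k.
by rewrite /kernel_point /vsub; ring.
Qed.

Lemma kernel_point_subx s w : vsub (kernel_point s w) x = vadd (vscale s v) (lincomb P w).
Proof.
by apply: functional_extensionality => k; rewrite /kernel_point /vsub /vadd /vscale; ring.
Qed.

Lemma norm1_kernel_point_subx s w eta : 0 <= s -> norm1 w <= eta * s ->
  norm1 (vsub (kernel_point s w) x) <= s * (norm1 v + \big[Rplus/0]_(l < m) norm1 (P l) * eta).
Proof.
move=> Hs Hw; rewrite kernel_point_subx; apply: Rle_trans (norm1_add _ _) _.
rewrite norm1_scale Rabs_right; last lra.
have HP := sumR_ge0 (fun l => norm1_ge0 (P l)).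
by have := norm1_lincomb_le P w; have := Rmult_le_compat_r _ _ _ HP Hw; nra.
Qed.

Lemma newton_step_sub s a b i : vsub (newton_step s a) (newton_step s b) i =
  - (F i (kernel_point s a) - F i (kernel_point s b)
     - dot (J i) (vsub (kernel_point s a) (kernel_point s b))).
Proof. by rewrite kernel_point_sub dot_lincomb_dual // /newton_step /vsub; ring. Qed.

Lemma newton_step0 s i :
  newton_step s vzero i = - (F i (kernel_point s vzero) - F i x - dot (J i) (vsub (kernel_point s vzero) x)).
Proof.
rewrite kernel_point_subx lincomb0 dot_addr dot_scaler Jv (dotC (J i)) dot0l F_x.
by rewrite /newton_step /vzero; ring.
Qed.

Lemma kernel_direction_feasible eta : 0 < eta -> exists s0, 0 < s0 /\ forall s, 0 < s < s0 ->
  exists w, (forall i, F i (kernel_point s w) = 0) /\ norm1 w <= eta * s.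
Proof.
move=> Heta.
set CP := \big[Rplus/0]_(l < m) norm1 (P l).
have HCP : 0 <= CP by apply: sumR_ge0 => l; exact: norm1_ge0.
have Hv := norm1_ge0 v; have Hm := pos_INR m.
pose eps := Rmin (1 / (2 * (INR m * CP + 1))) (eta / (2 * (INR m * norm1 v + 1))).
have Heps : 0 < eps by apply: Rmin_pos; apply: Rdiv_lt_0_compat; nra.
have E1 : INR m * CP * eps <= 1 / 2 by apply: Rmult_le_half; [nra | lra | exact: Rmin_l].
have E2 : INR m * norm1 v * eps <= eta / 2 by apply: Rmult_le_half; [nra | lra | exact: Rmin_r].
have [d [Hd HFd]] := strict_grad_uniform F_grad Heps.
have HK : 0 < norm1 v + CP * eta + 1 by nra.
exists (d / (norm1 v + CP * eta + 1)); split; first exact: Rdiv_lt_0_compat.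
move=> s [Hs Hs0].
have Hball : forall w, norm1 w <= eta * s -> norm1 (vsub (kernel_point s w) x) < d.
  move=> w Hw; have := norm1_kernel_point_subx (Rlt_le _ _ Hs) Hw; rewrite -/CP.
  have := Rmult_lt_compat_r _ _ _ HK Hs0.
  have -> : d / (norm1 v + CP * eta + 1) * (norm1 v + CP * eta + 1) = d by field; lra.
  by nra.
have [w [Hwr Hw]] : exists w, norm1 w <= eta * s /\ forall i, newton_step s w i = w i.
  apply: contraction_fixpoint; first nra.
    move=> a b Ha Hb; apply: Rle_trans (norm1_le_sup (B := eps * (CP * norm1 (vsub a b))) _) _.
      move=> i; rewrite newton_step_sub Rabs_Ropp.
      apply: Rle_trans (HFd i _ _ (Hball a Ha) (Hball b Hb)) _.
      rewrite kernel_point_sub; apply: Rmult_le_compat_l; first lra.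
      by have := norm1_lincomb_le P (vsub a b); rewrite -/CP; lra.
    by have := norm1_ge0 (vsub a b); nra.
  apply: Rle_trans (norm1_le_sup (B := eps * (s * norm1 v)) _) _; last by nra.
  move=> i; rewrite newton_step0 Rabs_Ropp.
  have Hx : norm1 (vsub x x) < d by rewrite norm1_subxx.
  apply: Rle_trans (HFd i _ _ (Hball vzero ltac:(rewrite norm1_zero; nra)) Hx) _.
  by rewrite kernel_point_subx lincomb0 (_ : vadd _ vzero = vscale s v) ?norm1_scale ?Rabs_right;
    [lra | lra | apply: functional_extensionality => k; rewrite /vadd /vzero; ring].
exists w; split => // i.
by have := Hw i; rewrite /newton_step; lra.
Qed.

Lemma kernel_direction_no_ascent (f : vec n -> R) g :
  is_strict_grad f g x -> (forall y, (forall i, F i y = 0) -> f y <= f x) -> dot g v <= 0.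
Proof.
move=> Hf Hopt; apply: Rnot_lt_le => Ha; set a := dot g v in Ha.
set CP := \big[Rplus/0]_(l < m) norm1 (P l).
have HCP : 0 <= CP by apply: sumR_ge0 => l; exact: norm1_ge0.
have Hng := norm1_ge0 g; have Hnv := norm1_ge0 v.
have HCg : 0 <= norm1 g * CP by nra.
pose eta := a / 2 / (2 * (norm1 g * CP + 1)).
have Heta : 0 < eta by apply: Rdiv_lt_0_compat; lra.
pose K := norm1 v + CP * eta + 1.
have HK : 0 < K by rewrite /K; nra.
pose eps := a / (4 * K).
have Heps : 0 < eps by apply: Rdiv_lt_0_compat; lra.
have [df [Hdf Hff]] := Hf eps Heps.
have [s0 [Hs0 Hfe]] := kernel_direction_feasible Heta.
have [s [Hs [Hss0 HsK]]] := exists_pos_lt2 Hs0 (Rdiv_lt_0_compat _ _ Hdf HK).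
have [w [HFw Hw]] := Hfe s (conj Hs Hss0).
set y := kernel_point s w.
have Hny : norm1 (vsub y x) <= s * K.
  by have := norm1_kernel_point_subx (Rlt_le _ _ Hs) Hw; rewrite -/CP -/y /K; nra.
have Hydf : norm1 (vsub y x) < df.
  have := Rmult_lt_compat_r _ _ _ HK HsK.
  have -> : df / K * K = df by field; lra.
  by lra.
have Hxx : norm1 (vsub x x) < df by rewrite norm1_subxx.
have Hrem := Hff y x Hydf Hxx.
have Dg : dot g (vsub y x) = s * a + dot g (lincomb P w).
  by rewrite kernel_point_subx dot_addr dot_scaler.
have Dgb : Rabs (dot g (lincomb P w)) <= norm1 g * CP * (eta * s).
  apply: Rle_trans (Rabs_dot_le _ _) _.
  have := Rle_trans _ _ _ (norm1_lincomb_le P w) (Rmult_le_compat_r _ _ _ HCP Hw).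
  by rewrite -/CP; nra.
have C1 : norm1 g * CP * eta <= a / 4.
  by have := Rmult_le_half HCg (Rlt_le 0 (a / 2) ltac:(lra)) (Rle_refl eta); lra.
have C2 : eps * norm1 (vsub y x) <= s * a / 4.
  apply: Rle_trans (Rmult_le_compat_l _ _ _ (Rlt_le _ _ Heps) Hny) _.
  by rewrite /eps; apply: Req_le; field; lra.
have := Hopt y HFw.
have := Rle_abs (- (f y - f x - dot g (vsub y x))); rewrite Rabs_Ropp.
have := Rle_abs (- dot g (lincomb P w)); rewrite Rabs_Ropp.
by nra.
Qed.

End ConstraintSet.

Theorem lagrange_multiplier n m (f : vec n -> R) g (F : 'I_m -> vec n -> R) (J : mat m n) x :
  is_strict_grad f g x -> (forall i, is_strict_grad (F i) (J i) x) -> (forall i, F i x = 0) ->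
  (forall y, (forall i, F i y = 0) -> f y <= f x) -> full_row_rank J ->
  exists lam : vec m, forall k, g k = \big[Rplus/0]_(i < m) (lam i * J i k).
Proof.
move=> Hf HF HF0 Hopt /RowSpace.full_row_rank_right_inverse [P HJP].
case: (RowSpace.rowspan_or_orthogonal J g) => [// | [v [HJv Hgv]]].
have HJv' : forall i, dot (J i) (vscale (-1) v) = 0 by move=> i; rewrite dot_scaler HJv; ring.
have := kernel_direction_no_ascent HF HF0 HJP HJv Hf Hopt.
have := kernel_direction_no_ascent HF HF0 HJP HJv' Hf Hopt.
by rewrite dot_scaler => H1 H2; exfalso; apply: Hgv; lra.
Qed.

(** * Concave maximisation *)

Lemma max_strict_grad0 n (f : vec n -> R) q A :
  is_strict_grad f q A -> (forall y, f y <= f A) -> forall i, q i = 0.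
Proof.
move=> Hs Hmax i; apply: NNPP => Hne.
have Hq : 0 < Rabs (q i) by apply: Rabs_pos_lt.
have [d [Hd H]] := Hs (Rabs (q i) / 2) ltac:(lra).
pose s := if Rle_dec 0 (q i) then d / 2 else - (d / 2).
have Hsq : s * q i = d / 2 * Rabs (q i).
  rewrite /s; case: (Rle_dec 0 (q i)) => Hc /=.
    by rewrite Rabs_right; [ring | lra].
  by rewrite Rabs_left; [ring | lra].
have Has : Rabs s = d / 2.
  by rewrite /s; case: (Rle_dec 0 (q i)) => _ /=; rewrite ?Rabs_Ropp Rabs_right; lra.
pose y := line A (unitv i) s.
have Ey : vsub y A = vscale s (unitv i).
  by apply: functional_extensionality => k; rewrite /y /line /vsub /vscale; ring.
have HAA : norm1 (vsub A A) < d by rewrite norm1_subxx.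
have Hy : norm1 (vsub y A) < d by rewrite Ey norm1_scale norm1_unitv Has; lra.
have := H y A Hy HAA; rewrite Ey dot_scaler dot_unitv norm1_scale norm1_unitv Has Hsq.
have := Hmax y.
have := Rle_abs (- (f y - f A - d / 2 * Rabs (q i))); rewrite Rabs_Ropp.
by nra.
Qed.

Lemma concave_strict_grad0_max n (f : vec n -> R) q A :
  is_strict_grad f q A -> (forall i, q i = 0) ->
  (forall y l, 0 < l < 1 -> l * f y + (1 - l) * f A <= f (line A (vsub y A) l)) ->
  forall y, f y <= f A.
Proof.
move=> Hs Hq Hconc y; apply: Rnot_lt_le => Hlt.
set h := vsub y A; have Hh := norm1_ge0 h.
pose eps := (f y - f A) / (2 * (norm1 h + 1)).
have [d [Hd H]] := Hs eps ltac:(apply: Rdiv_lt_0_compat; lra).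
pose l := Rmin (1 / 2) (d / (2 * (norm1 h + 1))).
have Hl0 : 0 < l by apply: Rmin_pos; [lra | apply: Rdiv_lt_0_compat; lra].
have Hl1 : l < 1 by have := Rmin_l (1 / 2) (d / (2 * (norm1 h + 1))); rewrite -/l; lra.
have Ez : vsub (line A h l) A = vscale l h.
  by apply: functional_extensionality => k; rewrite /line /vsub /vscale; ring.
have Hz : norm1 (vsub (line A h l) A) < d.
  rewrite Ez norm1_scale Rabs_right; last lra.
  by have := Rmult_le_half Hh (Rlt_le _ _ Hd) (Rmin_r (1 / 2) (d / (2 * (norm1 h + 1)))); rewrite -/l; nra.
have HAA : norm1 (vsub A A) < d by rewrite norm1_subxx.
have := H _ _ Hz HAA.
have -> : dot q (vsub (line A h l) A) = 0 by rewrite /dot big1 // => k _; rewrite Hq; ring.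
rewrite Ez norm1_scale (Rabs_right l); last lra.
have := Hconc y l (conj Hl0 Hl1); rewrite -/h.
have := Rmult_le_half Hh (Rlt_le _ _ (Rgt_minus _ _ Hlt)) (Rle_refl eps).
have := Rle_abs (f (line A h l) - f A - 0).
by nra.
Qed.

(** * Contract variables and the Agent's problem *)

Definition iB {D N : nat} : 'I_(1 + D + N) := lshift N (lshift D ord0).
Definition iG {D N : nat} (j : 'I_D) : 'I_(1 + D + N) := lshift N (rshift 1 j).
Definition iA {D N : nat} (j : 'I_N) : 'I_(1 + D + N) := rshift (1 + D) j.

(* A contract [(beta, gamma, A)] as one vector of [R^(1 + D + N)], laid out as in [blk3]. *)
Definition vjoin3 {D N : nat} (b : R) (gm : vec D) (A : vec N) : vec (1 + D + N) :=
  fun k => match split k with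
           | inl k1 => match split k1 with inl _ => b | inr j => gm j end
           | inr j => A j end.
Definition blkG {D N : nat} (x : vec (1 + D + N)) : vec D := fun j => x (iG j).
Definition blkA {D N : nat} (x : vec (1 + D + N)) : vec N := fun j => x (iA j).

Lemma vjoin3_B D N b (gm : vec D) (A : vec N) : vjoin3 b gm A iB = b.
Proof. by rewrite /vjoin3 /iB !(unsplitK (inl _ _)). Qed.
Lemma vjoin3_G D N b (gm : vec D) (A : vec N) j : vjoin3 b gm A (iG j) = gm j.
Proof. by rewrite /vjoin3 /iG (unsplitK (inl _ _)) (unsplitK (inr _ _)). Qed.
Lemma vjoin3_A D N b (gm : vec D) (A : vec N) j : vjoin3 b gm A (iA j) = A j.
Proof. by rewrite /vjoin3 /iA (unsplitK (inr _ _)). Qed.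

Lemma blkG_vjoin3 D N b (gm : vec D) (A : vec N) : blkG (vjoin3 b gm A) = gm.
Proof. by apply: functional_extensionality => j; rewrite /blkG vjoin3_G. Qed.
Lemma blkA_vjoin3 D N b (gm : vec D) (A : vec N) : blkA (vjoin3 b gm A) = A.
Proof. by apply: functional_extensionality => j; rewrite /blkA vjoin3_A. Qed.

Lemma blk3_B N D (v : vec N) (M1 : mat N D) (M2 : mat N N) i : blk3 v M1 M2 i iB = v i.
Proof. exact: (vjoin3_B (v i) (M1 i) (M2 i)). Qed.
Lemma blk3_G N D (v : vec N) (M1 : mat N D) (M2 : mat N N) i j : blk3 v M1 M2 i (iG j) = M1 i j.
Proof. exact: (vjoin3_G (v i) (M1 i) (M2 i) j). Qed.
Lemma blk3_A N D (v : vec N) (M1 : mat N D) (M2 : mat N N) i j : blk3 v M1 M2 i (iA j) = M2 i j.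
Proof. exact: (vjoin3_A (v i) (M1 i) (M2 i) j). Qed.

Lemma vjoin3E D N (y : vec (1 + D + N)) b gm A :
  y iB = b -> (forall j, y (iG j) = gm j) -> (forall j, y (iA j) = A j) ->
  forall k, y k = vjoin3 b gm A k.
Proof.
move=> HB HG HA k; rewrite /vjoin3.
case: splitP => [k1 Hk1 | j Hj].
  case: splitP => [k2 Hk2 | j Hj].
    have -> : k = iB by apply: val_inj; rewrite /iB /= Hk1 Hk2; case: k2 {Hk2} => [[|?] ?].
    exact: HB.
  by have -> : k = iG j by apply: val_inj; rewrite /iG /= Hk1 Hj.
by have -> : k = iA j by apply: val_inj; rewrite /iA /= Hj.
Qed.

Lemma dot_vjoin3 D N (y : vec (1 + D + N)) b gm A :
  dot (vjoin3 b gm A) y = b * y iB + dot gm (blkG y) + dot A (blkA y).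
Proof.
rewrite /dot big_split_ord /= big_split_ord /= big_ord1 -/(lshift _ _).
rewrite (vjoin3_B b gm A); congr (_ + _ + _).
  by apply: eq_bigr => j _; rewrite (vjoin3_G b gm A j).
by apply: eq_bigr => j _; rewrite (vjoin3_A b gm A j).
Qed.

Lemma norm1_blocks D N (y : vec (1 + D + N)) :
  norm1 y = Rabs (y iB) + norm1 (blkG y) + norm1 (blkA y).
Proof. by rewrite /norm1 big_split_ord /= big_split_ord /= big_ord1. Qed.

Lemma norm1_blkA_le D N (y : vec (1 + D + N)) : norm1 (blkA y) <= norm1 y.
Proof. by rewrite (norm1_blocks y); have := Rabs_pos (y iB); have := norm1_ge0 (blkG y); lra. Qed.
Lemma norm1_blkG_le D N (y : vec (1 + D + N)) : norm1 (blkG y) <= norm1 y.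
Proof. by rewrite (norm1_blocks y); have := Rabs_pos (y iB); have := norm1_ge0 (blkA y); lra. Qed.

Lemma is_strict_grad_blkA D N (h : vec N -> R) q (x : vec (1 + D + N)) :
  is_strict_grad h q (blkA x) -> is_strict_grad (fun y => h (blkA y)) (vjoin3 0 vzero q) x.
Proof.
move=> Hh eps He; have [d [Hd H]] := Hh eps He; exists d; split => // a b Ha Hb.
rewrite dot_vjoin3 dot0l Rmult_0_l !Rplus_0_l.
apply: Rle_trans (H _ _ (Rle_lt_trans _ _ _ (norm1_blkA_le (vsub a x)) Ha)
                        (Rle_lt_trans _ _ _ (norm1_blkA_le (vsub b x)) Hb)) _.
by apply: Rmult_le_compat_l; [lra | exact: (norm1_blkA_le (vsub a b))].
Qed.

Lemma is_strict_grad_blkG D N (h : vec D -> R) q (x : vec (1 + D + N)) :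
  is_strict_grad h q (blkG x) -> is_strict_grad (fun y => h (blkG y)) (vjoin3 0 q vzero) x.
Proof.
move=> Hh eps He; have [d [Hd H]] := Hh eps He; exists d; split => // a b Ha Hb.
rewrite dot_vjoin3 dot0l Rmult_0_l Rplus_0_l Rplus_0_r.
apply: Rle_trans (H _ _ (Rle_lt_trans _ _ _ (norm1_blkG_le (vsub a x)) Ha)
                        (Rle_lt_trans _ _ _ (norm1_blkG_le (vsub b x)) Hb)) _.
by apply: Rmult_le_compat_l; [lra | exact: (norm1_blkG_le (vsub a b))].
Qed.

Lemma is_strict_grad_iB D N (x : vec (1 + D + N)) :
  is_strict_grad (fun y => y iB) (vjoin3 1 vzero vzero) x.
Proof.
move=> eps He; exists 1; split; first lra; move=> a b _ _.
rewrite dot_vjoin3 !dot0l.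
have -> : a iB - b iB - (1 * vsub a b iB + 0 + 0) = 0 by rewrite /vsub; ring.
by rewrite Rabs_R0; have := norm1_ge0 (vsub a b); nra.
Qed.

Definition agent_gain N D (mu : vec N) (sigma : mat N D) (ga : vec D -> R) (c : vec N -> R)
  beta (A : vec N) gamma (Abar : vec N) :=
  beta * dot (vsub Abar A) mu + ga (vadd gamma (vscale beta (trmv sigma (vsub Abar A)))) - c Abar.

Lemma agent_gain_at N D (mu : vec N) (sigma : mat N D) ga c beta A gamma :
  agent_gain mu sigma ga c beta A gamma A = ga gamma - c A.
Proof.
have E0 : vsub A A = vzero by apply: functional_extensionality => k; rewrite /vsub /vzero; ring.
have E1 : vadd gamma (vscale beta (trmv sigma (vsub A A))) = gamma.
  apply: functional_extensionality => k; rewrite /vadd /vscale /trmv E0.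
  by rewrite big1 => [|i _]; rewrite /vzero; ring.
by rewrite /agent_gain E1 E0 dot0l; ring.
Qed.

Lemma Ct_agent_gain N D (mu : vec N) (sigma : mat N D) ga c beta A gamma :
  Ct mu sigma ga c beta A gamma <->
  forall Abar, agent_gain mu sigma ga c beta A gamma Abar <= agent_gain mu sigma ga c beta A gamma A.
Proof. by rewrite agent_gain_at. Qed.

Lemma is_strict_grad_affine n (w : vec n) c0 (A x : vec n) :
  is_strict_grad (fun a => c0 + dot w (vsub a A)) w x.
Proof.
apply: is_strict_grad_ext (is_strict_grad_add (is_strict_grad_dot w x) (is_strict_grad_const (c0 - dot w A) x)).
  by move=> a; rewrite dot_subr; ring.
by move=> k; rewrite /vadd /vzero; ring.
Qed.

Lemma agent_gain_strict_grad N D (mu : vec N) (sigma : mat N D) ga Dga c Dc beta A gamma :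
  is_C1 ga Dga -> is_C1 c Dc ->
  is_strict_grad (agent_gain mu sigma ga c beta A gamma)
        (fun i => beta * mu i - Dc A i + beta * mulmv sigma (Dga gamma) i) A.
Proof.
move=> Hga Hc.
pose M := fun (j : 'I_D) (i : 'I_N) => beta * sigma i j.
have Harg : forall j, is_strict_grad (fun a => gamma j + dot (M j) (vsub a A)) (M j) A.
  by move=> j; exact: is_strict_grad_affine.
have Hga0 : is_strict_grad ga (Dga gamma) (fun j => gamma j + dot (M j) (vsub A A)).
  have -> : (fun j => gamma j + dot (M j) (vsub A A)) = gamma.
    apply: functional_extensionality => j.
    by rewrite /dot big1 => [|i _]; rewrite /vsub ?Rminus_diag; ring.
  exact: is_C1_strict_grad.
have := is_strict_grad_sub
  (is_strict_grad_add (is_strict_grad_affine (vscale beta mu) 0 A A) (is_strict_grad_comp Harg Hga0))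
  (is_C1_strict_grad Hc A).
apply: is_strict_grad_ext => [a | k].
  rewrite /agent_gain dot_scalel (dotC mu).
  have -> : (fun j => gamma j + dot (M j) (vsub a A))
            = vadd gamma (vscale beta (trmv sigma (vsub a A))).
    apply: functional_extensionality => j; rewrite /vadd /vscale /trmv /dot /M big_distrr.
    by congr (_ + _); apply: eq_bigr => i _ /=; ring.
  ring.
rewrite /vsub /vadd /vscale /mulmv /lincomb /M.
have -> : \big[Rplus/0]_(j < D) (Dga gamma j * (beta * sigma k j))
          = beta * \big[Rplus/0]_(j < D) (sigma k j * Dga gamma j).
  by rewrite big_distrr; apply: eq_bigr => j _ /=; ring.
ring.
Qed.

Lemma agent_gain_concave N D (mu : vec N) (sigma : mat N D) ga c beta A gamma :
  concave_fun ga -> strictly_convex_fun c -> forall y l, 0 < l < 1 ->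
  l * agent_gain mu sigma ga c beta A gamma y + (1 - l) * agent_gain mu sigma ga c beta A gamma A <=
  agent_gain mu sigma ga c beta A gamma (line A (vsub y A) l).
Proof.
move=> Hga Hc y l Hl.
case: (classic (y = A)) => [-> | Hne].
  have -> : line A (vsub A A) l = A.
    by apply: functional_extensionality => k; rewrite /line /vsub; ring.
  lra.
rewrite agent_gain_at.
set h := vsub y A.
have Ez : vsub (line A h l) A = vscale l h.
  by apply: functional_extensionality => k; rewrite /line /vsub /vscale; ring.
set u := vadd gamma (vscale beta (trmv sigma h)).
have Eg : vadd gamma (vscale beta (trmv sigma (vsub (line A h l) A)))
          = vadd (vscale l u) (vscale (1 - l) gamma).
  apply: functional_extensionality => j; rewrite Ez /u /vadd /vscale /trmv.
  have -> : \big[Rplus/0]_(i < N) (sigma i j * (l * h i)) = l * \big[Rplus/0]_(i < N) (sigma i j * h i).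
    by rewrite big_distrr; apply: eq_bigr => i _ /=; ring.
  ring.
have Hcg := Hga u gamma l (conj (Rlt_le _ _ (proj1 Hl)) (Rlt_le _ _ (proj2 Hl))).
have Ecz : line A h l = vadd (vscale l y) (vscale (1 - l) A).
  by apply: functional_extensionality => k; rewrite /line /h /vadd /vscale /vsub; ring.
have Hcc : c (line A h l) <= l * c y + (1 - l) * c A by rewrite Ecz; apply: Rlt_le; exact: Hc.
rewrite /agent_gain Eg Ez dot_scalel -/h -/u.
by nra.
Qed.

Lemma Ct_iff_foc N D (mu : vec N) (sigma : mat N D) ga Dga c Dc :
  is_C1 ga Dga -> concave_fun ga -> is_C1 c Dc -> strictly_convex_fun c ->
  forall beta A gamma, Ct mu sigma ga c beta A gamma <->
    (forall i, beta * mu i - Dc A i + beta * mulmv sigma (Dga gamma) i = 0).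
Proof.
move=> Hga1 Hgac Hc1 Hcc beta A gamma.
have Hs := agent_gain_strict_grad mu sigma beta A gamma Hga1 Hc1.
rewrite Ct_agent_gain; split => [Hmax | Hfoc].
  exact: max_strict_grad0 Hs Hmax.
exact: concave_strict_grad0_max Hs Hfoc (agent_gain_concave _ _ _ _ _ Hgac Hcc).
Qed.

(** * The Principal's first-order conditions *)

Section PrincipalProblem.
Variables (N D : nat) (mu : vec N) (sigma : mat N D) (ga gp : vec D -> R) (c : vec N -> R).
Variables (Dga Dgp : vec D -> vec D) (Hga : vec D -> mat D D).
Variables (Dc : vec N -> vec N) (Hc : vec N -> mat N N).
Hypothesis ga_C2 : is_C2 ga Dga Hga.
Hypothesis gp_C1 : is_C1 gp Dgp.
Hypothesis c_C2 : is_C2 c Dc Hc.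

Definition foc_residual (i : 'I_N) (y : vec (1 + D + N)) : R :=
  y iB * mu i - Dc (blkA y) i + y iB * mulmv sigma (Dga (blkG y)) i.

Definition foc_jacobian beta (gamma : vec D) (A : vec N) : mat N (1 + D + N) :=
  blk3 (vadd mu (mulmv sigma (Dga gamma)))
       (fun i k => beta * mulmm sigma (Hga gamma) i k) (fun i k => - Hc A i k).

Definition principal_value (y : vec (1 + D + N)) : R :=
  principal_obj mu sigma ga gp c (blkA y) (blkG y).

Lemma foc_residual_strict_grad beta gamma A i :
  is_strict_grad (foc_residual i) (foc_jacobian beta gamma A i) (vjoin3 beta gamma A).
Proof.
set xs := vjoin3 beta gamma A.
have S1 := is_strict_grad_mul (is_strict_grad_iB xs) (is_strict_grad_const (mu i) xs).
have S2 := is_strict_grad_blkA (is_C1_strict_grad (proj2 c_C2 i) (blkA xs)).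
have S3 := is_strict_grad_sum (fun j => is_strict_grad_scal (sigma i j)
  (is_strict_grad_blkG (is_C1_strict_grad (proj2 ga_C2 j) (blkG xs)))).
have := is_strict_grad_add (is_strict_grad_sub S1 S2) (is_strict_grad_mul (is_strict_grad_iB xs) S3).
apply: is_strict_grad_ext => [y | ]; first by [].
rewrite /xs blkA_vjoin3 blkG_vjoin3 vjoin3_B; apply: vjoin3E => [|j|j];
  rewrite /vadd /vsub /vscale /vzero; cbv beta; rewrite ?vjoin3_B ?vjoin3_G ?vjoin3_A.
- rewrite big1 => [|j _]; last by rewrite vjoin3_B; ring.
  by rewrite /mulmv; ring.
- under eq_bigr do rewrite vjoin3_G.
  by rewrite !Rmult_0_r Rplus_0_l Rminus_0_r Rplus_0_l Rplus_0_r.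
- rewrite big1 => [|j0 _]; last by rewrite vjoin3_A; ring.
  by ring.
Qed.

Lemma principal_value_strict_grad x :
  let z := vsub (trmv sigma (blkA x)) (blkG x) in
  is_strict_grad principal_value
    (vjoin3 0 (vsub (Dga (blkG x)) (Dgp z)) (fun i => mu i - Dc (blkA x) i + mulmv sigma (Dgp z) i)) x.
Proof.
move=> z.
have O1 : is_strict_grad (fun y => dot (blkA y) mu) (vjoin3 0 vzero mu) x.
  apply: (is_strict_grad_blkA (h := fun a => dot a mu)).
  exact: is_strict_grad_ext (fun a => dotC mu a) (fun k => erefl) (is_strict_grad_dot mu _).
have O2 := is_strict_grad_blkA (is_C1_strict_grad (proj1 c_C2) (blkA x)).
have O3 := is_strict_grad_blkG (is_C1_strict_grad (proj1 ga_C2) (blkG x)).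
have Hz : forall j, is_strict_grad (fun y => trmv sigma (blkA y) j - blkG y j)
    (vsub (vjoin3 0 vzero (fun i => sigma i j)) (vjoin3 0 (unitv j) vzero)) x.
  by move=> j; apply: is_strict_grad_sub;
    [exact: is_strict_grad_blkA (is_strict_grad_dot _ _) | exact: is_strict_grad_blkG (is_strict_grad_coord _ _)].
have O4 := is_strict_grad_comp Hz (is_C1_strict_grad gp_C1 z).
apply: is_strict_grad_ext (is_strict_grad_add (is_strict_grad_add (is_strict_grad_sub O1 O2) O3) O4) => // k.
apply: vjoin3E => [|j0|i0]; rewrite /vadd /vsub /lincomb /= !(vjoin3_B, vjoin3_G, vjoin3_A).
- by rewrite big1 => [|j _]; rewrite ?vjoin3_B /vzero; ring.
- under eq_bigr do rewrite !vjoin3_G.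
  have -> : forall u : vec D, \big[Rplus/0]_(j < D) (u j * (vzero j0 - unitv j j0)) = - u j0.
    move=> u; rewrite -(sumR_kron u j0) -sumR_opp; apply: eq_bigr => j _.
    by rewrite /unitv /vzero eq_sym; ring.
  by rewrite /vzero; ring.
- under eq_bigr do rewrite !vjoin3_A.
  rewrite /mulmv /vzero Rplus_0_r; congr (_ + _).
  by apply: eq_bigr => j _; ring.
Qed.

Hypothesis ga_concave : concave_fun ga.
Hypothesis c_convex : strictly_convex_fun c.

Lemma principal_kkt beta A gamma :
  Ct mu sigma ga c beta A gamma ->
  (forall beta' A' gamma', Ct mu sigma ga c beta' A' gamma' ->
     principal_obj mu sigma ga gp c A' gamma' <= principal_obj mu sigma ga gp c A gamma) ->
  full_row_rank (foc_jacobian beta gamma A) ->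
  exists lam : vec N,
    (forall i, mu i - Dc A i + mulmv sigma (Dgp (vsub (trmv sigma A) gamma)) i
               - mulmv (Hc A) lam i = 0) /\
    (forall j, Dga gamma j - Dgp (vsub (trmv sigma A) gamma) j
               + beta * mulmv (Hga gamma) (trmv sigma lam) j = 0) /\
    dot lam (vadd mu (mulmv sigma (Dga gamma))) = 0.
Proof.
move=> HCt Hmax Hrank.
have foc := Ct_iff_foc mu sigma (proj1 ga_C2) ga_concave (proj1 c_C2) c_convex.
have HF0 : forall i, foc_residual i (vjoin3 beta gamma A) = 0.
  by rewrite /foc_residual vjoin3_B blkA_vjoin3 blkG_vjoin3; apply/foc.
have Hopt : forall y, (forall i, foc_residual i y = 0) ->
    principal_value y <= principal_value (vjoin3 beta gamma A).
  by move=> y Hy; rewrite /principal_value blkA_vjoin3 blkG_vjoin3; apply: (Hmax (y iB)); apply/foc.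
have [lam Hlam] := lagrange_multiplier (principal_value_strict_grad _)
  (foc_residual_strict_grad beta gamma A) HF0 Hopt Hrank.
rewrite blkA_vjoin3 blkG_vjoin3 in Hlam.
exists (fun i => - lam i); split; [|split].
- move=> i0; have := Hlam (iA i0); rewrite vjoin3_A => ->.
  rewrite /mulmv -sumR_sub big1 // => i _; rewrite /foc_jacobian blk3_A.
  by rewrite (hessian_sym c_C2 A i0 i); ring.
- move=> j0; have := Hlam (iG j0); rewrite vjoin3_G /vsub => ->.
  suff -> : beta * mulmv (Hga gamma) (trmv sigma (fun i => - lam i)) j0
            = - \big[Rplus/0]_(i < N) (lam i * foc_jacobian beta gamma A i (iG j0)) by ring.
  rewrite -sumR_opp /mulmv /trmv big_distrr.
  transitivity (\big[Rplus/0]_(k < D) \big[Rplus/0]_(i < N)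
                  (- lam i * beta * (sigma i k * Hga gamma k j0))).
    apply: eq_bigr => k _; rewrite !big_distrr; apply: eq_bigr => i _ /=.
    by rewrite (hessian_sym ga_C2 gamma j0 k); ring.
  rewrite exchange_big; apply: eq_bigr => i _.
  rewrite /foc_jacobian blk3_G /mulmm.
  have -> : forall S, - (lam i * (beta * S)) = - lam i * beta * S by move=> S; ring.
  by rewrite big_distrr.
- have := Hlam iB; rewrite vjoin3_B => H0.
  transitivity (- \big[Rplus/0]_(i < N) (lam i * foc_jacobian beta gamma A i iB)); last first.
    by rewrite -H0; ring.
  by rewrite /dot -sumR_opp; apply: eq_bigr => i _; rewrite /foc_jacobian blk3_B; ring.
Qed.

End PrincipalProblem.

Theorem mainTheorem9
  (T N d D : nat) (mu : vec N) (sigma : mat N D)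
  (ga gp : nat -> vec D -> R) (c : nat -> vec N -> R)
  (Dga : nat -> vec D -> vec D) (Hga : nat -> vec D -> mat D D)
  (Dgp : nat -> vec D -> vec D)
  (Dc : nat -> vec N -> vec N) (Hc : nat -> vec N -> mat N N)
  (HNd : (N <= d)%N) (HdD : (d <= D)%N)
  (Hsig0 : forall (i : 'I_N) (j : 'I_D), (d <= j)%N -> sigma i j = 0)
  (Hsigind : full_row_rank sigma)
  (Hga_conc : forall t, (t < T)%N -> concave_fun (ga t) /\ ga t vzero = 0)
  (Hgp_conc : forall t, (t < T)%N -> concave_fun (gp t) /\ gp t vzero = 0)
  (Hc_conv : forall t, (t < T)%N -> strictly_convex_fun (c t))
  (Hgp_C1 : forall t, (t < T)%N -> is_C1 (gp t) (Dgp t))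
  (Hga_C2 : forall t, (t < T)%N -> is_C2 (ga t) (Dga t) (Hga t))
  (Hc_C2 : forall t, (t < T)%N -> is_C2 (c t) (Dc t) (Hc t)) :
  (forall t, (t < T)%N -> forall (beta : R) (A : vec N) (gamma : vec D),
      Ct mu sigma (ga t) (c t) beta A gamma <->
      (forall i, beta * mu i - Dc t A i + beta * mulmv sigma (Dga t gamma) i = 0))
  /\
  (forall (At : nat -> vec N) (betat : nat -> R) (gammat : nat -> vec D),
      optimal_contract T mu sigma ga gp c At betat gammat ->
      (forall t, (t < T)%N ->
         full_row_rank
           (blk3 (vadd mu (mulmv sigma (Dga t (gammat t))))
                 (fun i k => betat t * mulmm sigma (Hga t (gammat t)) i k)
                 (fun i k => - Hc t (At t) i k))) ->
      forall t, (t < T)%N -> exists lam : vec N,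
        (forall i, betat t * mu i - Dc t (At t) i
                   + betat t * mulmv sigma (Dga t (gammat t)) i = 0) /\
        (forall i, mu i - Dc t (At t) i
                   + mulmv sigma (Dgp t (vsub (trmv sigma (At t)) (gammat t))) i
                   - mulmv (Hc t (At t)) lam i = 0) /\
        (forall j, Dga t (gammat t) j
                   - Dgp t (vsub (trmv sigma (At t)) (gammat t)) j
                   + betat t * mulmv (Hga t (gammat t)) (trmv sigma lam) j = 0) /\
        dot lam (vadd mu (mulmv sigma (Dga t (gammat t)))) = 0).
Proof.
have foc t (Ht : (t < T)%N) := Ct_iff_foc mu sigma (proj1 (Hga_C2 t Ht))
  (proj1 (Hga_conc t Ht)) (proj1 (Hc_C2 t Ht)) (Hc_conv t Ht).
split => [t Ht | At betat gammat Hopt Hrank t Ht]; first exact: foc.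
have [HCt Hmax] := Hopt t Ht.
have [lam Hlam] := principal_kkt (Hga_C2 t Ht) (Hgp_C1 t Ht) (Hc_C2 t Ht)
  (proj1 (Hga_conc t Ht)) (Hc_conv t Ht) HCt Hmax (Hrank t Ht).
by exists lam; split; first exact/(foc t Ht).
Qed.
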